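(* Let $\mathcal D$ be an ordered, oriented Descartes configuration with integer curvatures $(b_1,b_2,b_3,b_4)$ and let $g=\gcd(b_1,b_2,b_3,b_4)$. Then the Apollonian super-packing $\mathcal A^S[\mathcal D]$ contains a Descartes configuration whose curvature vector is a permutation of $(0,0,g,g)$ if $b_1+b_2+b_3+b_4>0$, and a permutation of $(0,0,-g,-g)$ if $b_1+b_2+b_3+b_4<0$.
   Context: Circles are taken in $\hat{\mathbb C}=\mathbb R^2\cup\{\infty\}$; lines count as circles. A Descartes configuration is a set of four mutually tangent circles with disjoint interiors; an ordered, oriented one carries an ordering and a total orientation, and the signed curvature of a circle is its reciprocal radius, negative for a circle whose interior is unbounded, $0$ for a line, with all signs reversed for negative total orientation. The curvature vector is $(b_1,\dots,b_4)^T$; it satisfies the Descartes relation $\sum b_i^2=\tfrac12(\sum b_i)^2$. Let $S_i$ be the $4\times4$ integer matrix equal to the identity except that row $i$ has $-1$ in position $i$ and $2$ in the other positions, $S_i^\perp=S_i^T$, and $\mathcal A^S=\langle S_1,\dots,S_4,S_1^\perp,\dots,S_4^\perp\rangle$ the super-Apollonian group. It acts on ordered oriented Descartes configurations by left multiplication on their augmented curvature-center coordinate matrices; in particular the curvature vector of $U[\mathcal D]$ is $U$ times the curvature vector of $\mathcal D$. The super-packing generated by $\mathcal D$ is the orbit $\mathcal A^S[\mathcal D]$. *)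

From mathcomp Require Import all_boot all_order all_algebra.
Set Implicit Arguments. Unset Strict Implicit. Unset Printing Implicit Defensive.
Import Order.TTheory GRing.Theory Num.Theory.
Local Open Scope ring_scope.

Definition S_gen (i : 'I_4) : 'M[int]_4 :=
  \matrix_(j < 4, k < 4)
    (if j == i then (if k == i then -1 else 2) else (j == k)%:R).

Definition S_perp (i : 'I_4) : 'M[int]_4 := (S_gen i)^T.

(* Membership in the super-Apollonian group A^S = <S_1..S_4, S_1^T..S_4^T>.
   All generators are involutions, so the group generated equals the set of
   finite products of generators (including the empty product). *)
Inductive in_superApollonian : 'M[int]_4 -> Prop :=
| sA_id : in_superApollonian 1%:M
| sA_S : forall i U, in_superApollonian U -> in_superApollonian (S_gen i *m U)
| sA_Sp : forall i U, in_superApollonian U -> in_superApollonian (S_perp i *m U).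

(* Descartes relation: sum b_i^2 = 1/2 (sum b_i)^2, i.e. 2 sum b_i^2 = (sum b_i)^2. *)
Definition descartes_rel (b : 'cV[int]_4) : Prop :=
  2 * (\sum_(i < 4) b i 0 ^+ 2) = (\sum_(i < 4) b i 0) ^+ 2.

Definition gcd4 (b : 'cV[int]_4) : int :=
  gcdz (gcdz (b 0 0) (b 1 0)) (gcdz (b 2%:R 0) (b 3%:R 0)).

Definition entries (b : 'cV[int]_4) : seq int := [seq b i 0 | i <- enum 'I_4].

From mathcomp Require Import all_boot all_order all_algebra.
From mathcomp Require Import ring lra zify.
Set Implicit Arguments. Unset Strict Implicit. Unset Printing Implicit Defensive.
Import Order.TTheory GRing.Theory Num.Theory.
Local Open Scope ring_scope.

(* Descent on the total curvature s.  The generator S_i replaces b_i by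
   2 s - 3 b_i (new total 3 s - 4 b_i), while S_i^perp negates b_i and adds
   2 b_i to the other entries (new total s + 4 b_i).  Both preserve the
   Descartes relation and, being integral involutions, the gcd of the entries.
   If s > 0 and some b_i < 0, S_i^perp lowers s; if some 2 b_i > s, S_i does;
   in both cases the new total stays positive, by the Descartes relation and
   Cauchy-Schwarz for the three other entries.  The descent stops at a vector
   with nonnegative entries none of which exceeds s / 2, and such a Descartes
   quadruple is a permutation of (0, 0, g, g).  The case s < 0 is the case
   s > 0 applied to -b. *)

Lemma S_gen_mulE i (b : 'cV[int]_4) j :
  (S_gen i *m b) j 0 = if j == i then 2 * \sum_k b k 0 - 3 * b i 0 else b j 0.
Proof.
rewrite mxE; under eq_bigr do rewrite mxE.
case: ifP => _.
- rewrite (bigD1 i) //= eqxx [\sum_k b k 0](bigD1 i) //=.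
  rewrite (eq_bigr (fun k => 2 * b k 0)) => [|k /negbTE -> //].
  rewrite -mulr_sumr; ring.
- rewrite (bigD1 j) //= eqxx mul1r big1 ?addr0 // => k kj.
  by rewrite eq_sym (negbTE kj) mul0r.
Qed.

Lemma S_perp_mulE i (b : 'cV[int]_4) j :
  (S_perp i *m b) j 0 = if j == i then - b i 0 else b j 0 + 2 * b i 0.
Proof.
rewrite mxE; under eq_bigr do rewrite !mxE.
rewrite (bigD1 i) //= eqxx.
case: eqP => [-> | /eqP ji].
- rewrite big1 ?addr0 => [|k /negbTE ki]; first by rewrite mulN1r.
  by rewrite ki mul0r.
- rewrite (bigD1 j) //= eqxx (negbTE ji) mul1r big1 ?addr0 => [|k /andP[ki kj]].
    by rewrite addrC.
  by rewrite (negbTE ki) (negbTE kj) mul0r.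
Qed.

Lemma sum_S_gen_mul i (b : 'cV[int]_4) :
  \sum_j (S_gen i *m b) j 0 = 3 * \sum_j b j 0 - 4 * b i 0.
Proof.
rewrite (bigD1 i) //=.
under eq_bigr => j /negbTE ji do rewrite S_gen_mulE ji.
rewrite S_gen_mulE eqxx [\sum_j b j 0](bigD1 i) //=.
ring.
Qed.

Lemma sumsq_S_gen_mul i (b : 'cV[int]_4) :
  \sum_j (S_gen i *m b) j 0 ^+ 2
    = \sum_j b j 0 ^+ 2 - b i 0 ^+ 2 + (2 * \sum_j b j 0 - 3 * b i 0) ^+ 2.
Proof.
rewrite (bigD1 i) //=.
under eq_bigr => j /negbTE ji do rewrite S_gen_mulE ji.
rewrite S_gen_mulE eqxx [\sum_j b j 0 ^+ 2](bigD1 i) //=.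
ring.
Qed.

Lemma sum_S_perp_mul i (b : 'cV[int]_4) :
  \sum_j (S_perp i *m b) j 0 = \sum_j b j 0 + 4 * b i 0.
Proof.
rewrite (bigD1 i) //=.
under eq_bigr => j /negbTE ji do rewrite S_perp_mulE ji.
rewrite S_perp_mulE eqxx [\sum_j b j 0](bigD1 i) //=.
rewrite big_split /= sumr_const cardC1 card_ord /=.
ring.
Qed.

Lemma sumsq_S_perp_mul i (b : 'cV[int]_4) :
  \sum_j (S_perp i *m b) j 0 ^+ 2
    = \sum_j b j 0 ^+ 2 + 4 * b i 0 * \sum_j b j 0 + 8 * b i 0 ^+ 2.
Proof.
rewrite (bigD1 i) //=.
under eq_bigr => j /negbTE ji do rewrite S_perp_mulE ji sqrrD.
rewrite S_perp_mulE eqxx [\sum_j b j 0](bigD1 i) //= [\sum_j b j 0 ^+ 2](bigD1 i) //=.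
rewrite !big_split /= -mulr_suml sumr_const cardC1 card_ord /=.
ring.
Qed.

Lemma S_gen_mulK i (b : 'cV[int]_4) : S_gen i *m (S_gen i *m b) = b.
Proof.
apply/colP => j; rewrite !S_gen_mulE sum_S_gen_mul.
by case: eqP => [-> | _] //; rewrite eqxx; lra.
Qed.

Lemma S_perp_mulK i (b : 'cV[int]_4) : S_perp i *m (S_perp i *m b) = b.
Proof.
apply/colP => j; rewrite !S_perp_mulE eqxx.
by case: eqP => [-> | _]; [rewrite opprK | ring].
Qed.

Lemma descartes_rel_S_gen i b : descartes_rel b -> descartes_rel (S_gen i *m b).
Proof. by rewrite /descartes_rel sum_S_gen_mul sumsq_S_gen_mul; lra. Qed.

Lemma descartes_rel_S_perp i b : descartes_rel b -> descartes_rel (S_perp i *m b).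
Proof. by rewrite /descartes_rel sum_S_perp_mul sumsq_S_perp_mul; lra. Qed.

Lemma in_superApollonian_mul U V :
  in_superApollonian U -> in_superApollonian V -> in_superApollonian (U *m V).
Proof.
elim=> [|i U' _ IH|i U' _ IH] hV; first by rewrite mul1mx.
- by rewrite -mulmxA; constructor; apply: IH.
- by rewrite -mulmxA; constructor; apply: IH.
Qed.

Lemma in_superApollonian_S_gen i : in_superApollonian (S_gen i).
Proof. by rewrite -[S_gen i]mulmx1; do 2 constructor. Qed.

Lemma in_superApollonian_S_perp i : in_superApollonian (S_perp i).
Proof. by rewrite -[S_perp i]mulmx1; do 2 constructor. Qed.

Lemma entries_col4 (b : 'cV[int]_4) :
  entries b = [:: b 0 0; b 1 0; b 2%:R 0; b 3%:R 0].
Proof.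
rewrite /entries !enum_ordSl enum_ord0 /=.
by do !congr (_ :: _); congr (b _ 0); apply/val_inj.
Qed.

Lemma dvdz_gcd4 d (b : 'cV[int]_4) :
  (d %| gcd4 b)%Z = all (dvdz d) (entries b).
Proof. by rewrite entries_col4 /gcd4 !dvdz_gcd /= andbT !andbA. Qed.

Lemma gcd4_ge0 (b : 'cV[int]_4) : 0 <= gcd4 b.
Proof. by []. Qed.

Lemma dvdz_anti_ge0 (m n : int) :
  0 <= m -> 0 <= n -> (m %| n)%Z -> (n %| m)%Z -> m = n.
Proof.
move=> m0 n0; rewrite !dvdzE => mn nm.
by rewrite -(gez0_abs m0) -(gez0_abs n0); congr Posz; apply/eqP; rewrite eqn_dvd mn.
Qed.

Lemma gcd4_dvd_mulmx (M : 'M[int]_4) (b : 'cV[int]_4) : (gcd4 b %| gcd4 (M *m b))%Z.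
Proof.
have /allP dvd_b : all (dvdz (gcd4 b)) (entries b) by rewrite -dvdz_gcd4 dvdzz.
rewrite dvdz_gcd4; apply/allP => _ /mapP[j _ ->]; rewrite mxE.
by apply: rpred_sum => k _; apply/dvdz_mull/dvd_b/map_f; rewrite mem_enum.
Qed.

Lemma gcd4_mulmx_invol (M : 'M[int]_4) (b : 'cV[int]_4) :
  M *m (M *m b) = b -> gcd4 (M *m b) = gcd4 b.
Proof.
move=> MK; apply: dvdz_anti_ge0; rewrite ?gcd4_ge0 //.
  by rewrite -[X in (_ %| gcd4 X)%Z]MK gcd4_dvd_mulmx.
exact: gcd4_dvd_mulmx.
Qed.

Lemma sqr_sum_le_card_sumsq (R : realDomainType) (I : finType) (A : {pred I})
    (F : I -> R) :
  (\sum_(i in A) F i) ^+ 2 <= #|A|%:R * \sum_(i in A) F i ^+ 2.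
Proof.
have sum_sqr_diff : \sum_(i in A) \sum_(j in A) (F i - F j) ^+ 2
    = 2 * (#|A|%:R * \sum_(i in A) F i ^+ 2 - (\sum_(i in A) F i) ^+ 2).
  have sqr_diff i j : (F i - F j) ^+ 2 = F i ^+ 2 + F j ^+ 2 - 2 * (F i * F j) by ring.
  under eq_bigr do under eq_bigr do rewrite sqr_diff.
  under eq_bigr do rewrite sumrB big_split /= sumr_const -!mulr_sumr.
  rewrite sumrB big_split /= sumr_const sumrMnl -!mulr_sumr -mulr_suml.
  by ring.
rewrite -subr_ge0 -(pmulr_rge0 _ (ltr0n _ 2)) -sum_sqr_diff.
by apply: sumr_ge0 => i _; apply: sumr_ge0 => j _; apply: sqr_ge0.
Qed.

Lemma sqr_sum_others_le (b : 'cV[int]_4) i :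
  (\sum_j b j 0 - b i 0) ^+ 2 <= 3 * (\sum_j b j 0 ^+ 2 - b i 0 ^+ 2).
Proof.
have sum_others (F : 'I_4 -> int) : \sum_(j in predC1 i) F j = \sum_j F j - F i.
  by rewrite [\sum_j F j](bigD1 i) //= [RHS]addrC addKr.
have := sqr_sum_le_card_sumsq (predC1 i) (fun j => b j 0).
by rewrite cardC1 card_ord !sum_others.
Qed.

Lemma perp_step_sum_gt0 (R : realDomainType) (s q a : R) :
  2 * q = s ^+ 2 -> (s - a) ^+ 2 <= 3 * (q - a ^+ 2) ->
  a < 0 -> 0 < s -> 0 < s + 4 * a.
Proof. by move=> *; nra. Qed.

Lemma gen_step_sum_gt0 (R : realDomainType) (s q a : R) :
  2 * q = s ^+ 2 -> (s - a) ^+ 2 <= 3 * (q - a ^+ 2) ->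
  s < 2 * a -> 0 < s -> 0 < 3 * s - 4 * a.
Proof. by move=> *; nra. Qed.

Lemma sorted_descartes_root (R : realDomainType) (a b c d : R) :
  0 <= a -> a <= b -> b <= c -> c <= d -> d <= a + b + c ->
  2 * (a ^+ 2 + b ^+ 2 + c ^+ 2 + d ^+ 2) = (a + b + c + d) ^+ 2 ->
  [/\ a = 0, b = 0 & c = d].
Proof.
move=> a_ge0 ab bc cd d_le descartes.
(* The relation reads (a + b + c - d)^2 = 4 (ab + bc + ca), and the two bounds
   below turn it into 3 c (a + b) <= 0. *)
have c_ab : c * (a + b) = 0.
  have : (a + b + c - d) ^+ 2 <= (a + b) ^+ 2 by rewrite ler_sqr ?nnegrE; lra.
  have : (b - a) ^+ 2 <= c * (a + b) by rewrite expr2; apply: ler_pM; lra.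
  nra.
have [a0 b0] : a = 0 /\ b = 0.
  by move/eqP: c_ab; rewrite mulf_eq0 => /orP[] /eqP; lra.
split => //; apply/eqP; rewrite -subr_eq0 -sqrf_eq0; apply/eqP.
by move: descartes; rewrite a0 b0; lra.
Qed.

Lemma big_entries (F : int -> int) (b : 'cV[int]_4) :
  \sum_(x <- entries b) F x = \sum_j F (b j 0).
Proof. by rewrite big_map big_enum. Qed.

Lemma reduced_root_perm (b : 'cV[int]_4) :
  descartes_rel b -> 0 < \sum_j b j 0 ->
  (forall i, 0 <= b i 0) -> (forall i, 2 * b i 0 <= \sum_j b j 0) ->
  perm_eq (entries b) [:: 0; 0; gcd4 b; gcd4 b].
Proof.
move=> descartes s_gt0 b_ge0 b_small.
have entry x : x \in entries b -> 0 <= x /\ 2 * x <= \sum_j b j 0.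
  by case/mapP => j _ ->.
have := perm_sort <=%O (entries b); have := sort_le_sorted (entries b).
have := size_sort <=%O (entries b); rewrite size_map size_enum_ord.
case: (sort _ _) => [|x1 [|x2 [|x3 [|x4 []]]]] //= _ /and4P[le12 le23 le34 _] sort_perm.
have perm_x : perm_eq (entries b) [:: x1; x2; x3; x4] by rewrite perm_sym sort_perm.
have sum_x (F : int -> int) : \sum_j F (b j 0) = F x1 + F x2 + F x3 + F x4.
  by rewrite -(big_entries F) (perm_big _ perm_x) /= !big_cons big_nil addr0 !addrA.
rewrite /descartes_rel (sum_x id) (sum_x (fun x => x ^+ 2)) /= in descartes s_gt0 entry.
have /entry[x1_ge0 _] : x1 \in entries b by rewrite (perm_mem perm_x) mem_head.
have /entry[_ x4_small] : x4 \in entries b by rewrite (perm_mem perm_x) !inE eqxx !orbT.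
have [x1_0 x2_0 x34] : [/\ x1 = 0, x2 = 0 & x3 = x4].
  by apply: sorted_descartes_root => //; lra.
have gcd_x4 : gcd4 b = x4.
  apply: dvdz_anti_ge0; rewrite ?gcd4_ge0 //; first lra.
    have : all (dvdz (gcd4 b)) (entries b) by rewrite -dvdz_gcd4 dvdzz.
    by rewrite (perm_all _ perm_x) /= andbT => /and4P[_ _ _].
  by rewrite dvdz_gcd4 (perm_all _ perm_x) /= x1_0 x2_0 x34 /dvdz dvdn0 dvdnn.
by apply: (perm_trans perm_x); rewrite gcd_x4 x1_0 x2_0 x34.
Qed.

Definition root_reachable (b : 'cV[int]_4) : Prop :=
  exists U, in_superApollonian U /\
    perm_eq (entries (U *m b)) [:: 0; 0; gcd4 b; gcd4 b].

Lemma root_reachable_step (M : 'M[int]_4) (b : 'cV[int]_4) :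
  in_superApollonian M -> M *m (M *m b) = b ->
  root_reachable (M *m b) -> root_reachable b.
Proof.
move=> M_in MK [U [U_in perm_U]]; exists (U *m M); split.
  exact: in_superApollonian_mul.
by rewrite -mulmxA -(gcd4_mulmx_invol MK).
Qed.

Lemma root_reachable_pos (b : 'cV[int]_4) :
  descartes_rel b -> 0 < \sum_j b j 0 -> root_reachable b.
Proof.
have [n s_le] : exists n : nat, \sum_j b j 0 <= n%:Z.
  by exists (absz (\sum_j b j 0)); rewrite abszE ler_norm.
elim: n b s_le => [|n IH] b s_le descartes s_gt0.
  by have := lt_le_trans s_gt0 s_le; rewrite ltxx.
have cauchy_schwarz := sqr_sum_others_le b.
case: (pickP (fun i => b i 0 < 0)) => [i bi_lt0 | b_ge0].
  apply: (root_reachable_step (in_superApollonian_S_perp i) (S_perp_mulK i b)).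
  apply: IH; rewrite ?sum_S_perp_mul; [lia | exact: descartes_rel_S_perp |].
  exact: perp_step_sum_gt0 descartes (cauchy_schwarz i) bi_lt0 s_gt0.
case: (pickP (fun i => \sum_j b j 0 < 2 * b i 0)) => [i bi_big | b_small].
  apply: (root_reachable_step (in_superApollonian_S_gen i) (S_gen_mulK i b)).
  apply: IH; rewrite ?sum_S_gen_mul; [lia | exact: descartes_rel_S_gen |].
  exact: gen_step_sum_gt0 descartes (cauchy_schwarz i) bi_big s_gt0.
exists 1%:M; split; first exact: sA_id.
rewrite mul1mx; apply: reduced_root_perm => // i.
  by rewrite leNgt b_ge0.
by rewrite leNgt b_small.
Qed.

Lemma sum_oppv (b : 'cV[int]_4) : \sum_j (- b) j 0 = - \sum_j b j 0.
Proof. by rewrite -sumrN; apply: eq_bigr => j _; rewrite mxE. Qed.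

Lemma descartes_relN (b : 'cV[int]_4) : descartes_rel b -> descartes_rel (- b).
Proof.
rewrite /descartes_rel sum_oppv sqrrN => <-.
by congr (_ * _); apply: eq_bigr => j _; rewrite mxE sqrrN.
Qed.

Lemma entriesN (b : 'cV[int]_4) : entries (- b) = map -%R (entries b).
Proof. by rewrite /entries; elim: (enum 'I_4) => //= i s ->; rewrite mxE. Qed.

Lemma gcd4N (b : 'cV[int]_4) : gcd4 (- b) = gcd4 b.
Proof. by rewrite /gcd4 !mxE !gcdNz !gcdzN. Qed.

Theorem theorem4p2 (b : 'cV[int]_4) :
  descartes_rel b ->
  (0 < \sum_(i < 4) b i 0 ->
     exists U, in_superApollonian U /\
       perm_eq (entries (U *m b)) [:: 0; 0; gcd4 b; gcd4 b]) /\
  (\sum_(i < 4) b i 0 < 0 ->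
     exists U, in_superApollonian U /\
       perm_eq (entries (U *m b)) [:: 0; 0; - gcd4 b; - gcd4 b]).
Proof.
move=> descartes; split => [s_gt0 | s_lt0]; first exact: root_reachable_pos.
have [|U [U_in perm_U]] := root_reachable_pos (descartes_relN descartes).
  by rewrite sum_oppv oppr_gt0.
exists U; split => //.
move: perm_U; rewrite gcd4N mulmxN entriesN => /(perm_map -%R).
by rewrite (mapK opprK) /= oppr0.
Qed.
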